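(* Let $H$ be a reduced double-well type potential and $h$ its Peierls barrier. Then \begin{enumerate} \item $h(0^\infty,x)=0$ for all $x\in[0]$ (in particular $h(0^\infty,0^\infty)=0$); \item $h(0^\infty,x)=\inf_{k\ge n}H_k^0$ for all $x\in[1^n0]$, $n\ge1$; in particular $h(0^\infty,1^\infty)=H_\infty^0$; \item $\liminf_{x\to0^\infty,\,x\neq 0^\infty}h(x,0^\infty)=H_{min}^0+H_\infty^1$; \item $h(1^\infty,x)=0$ for all $x\in[1]$ (in particular $h(1^\infty,1^\infty)=0$); \item $h(1^\infty,x)=\inf_{k\ge n}H_k^1$ for all $x\in[0^n1]$, $n\ge1$; in particular $h(1^\infty,0^\infty)=H_\infty^1$; \item $\liminf_{x\to1^\infty,\,x\neq1^\infty}h(x,1^\infty)=H_{min}^1+H_\infty^0$. \end{enumerate}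
   Context: $\Sigma:=\{0,1\}^{\mathbb N}$, $\sigma$ the left shift, cylinders $[i_0\dots i_{n-1}]$; $x\stackrel{n}{=}y$ means $x_j=y_j$ for $0\le j<n$; $\mathrm{var}(H,n):=\sup\{|H(x)-H(y)|:x\stackrel{n}{=}y\}$. A reduced double-well type potential is a continuous nonnegative $H:\Sigma\to\mathbb R$ with $\sum_n\mathrm{var}(H,n)<\infty$ such that $H=0$ on $[00]\cup[11]$, $H=H_n^0>0$ on $[01^n0]$, $H=H_n^1>0$ on $[10^n1]$ for $n\ge1$, and $\sum_{k\ge1}\sup_{n\ge0}|H_k^i-H_{k+n}^i|<\infty$ ($i=0,1$). Set $H_\infty^i:=\lim_nH_n^i$, $H_{min}^i:=\inf_{n\ge1}H_n^i$. $\bar H:=\lim_{n}\inf_{x}\frac1n\sum_{k=0}^{n-1}H(\sigma^kx)$ (here $\bar H=0$). Peierls barrier: $h(x,y):=\lim_{p\to\infty}\lim_{n\to\infty}S_n^p(x,y)$, $S_n^p(x,y):=\inf\{\sum_{i=0}^{k-1}[H(\sigma^iz)-\bar H]:k\ge n,\ z\stackrel{p}{=}x,\ \sigma^k(z)\stackrel{p}{=}y\}$. *)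

From Stdlib Require Import Reals Lra ClassicalEpsilon.
Open Scope R_scope.

Inductive Rbar : Type := Finite (r : R) | p_infty | m_infty.

Definition Rbar_le (x y : Rbar) : Prop :=
  match x, y with
  | m_infty, _ => True
  | _, p_infty => True
  | p_infty, _ => False
  | _, m_infty => False
  | Finite a, Finite b => a <= b
  end.

Definition Rbar_plus (x y : Rbar) : Rbar :=
  match x, y with
  | Finite a, Finite b => Finite (a + b)
  | p_infty, m_infty | m_infty, p_infty => Finite 0 (* undefined case, unused *)
  | p_infty, _ | _, p_infty => p_infty
  | m_infty, _ | _, m_infty => m_infty
  end.

Definition is_glb_Rbar (E : Rbar -> Prop) (l : Rbar) : Prop :=
  (forall x, E x -> Rbar_le l x) /\
  (forall m, (forall x, E x -> Rbar_le m x) -> Rbar_le m l).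
Definition is_lub_Rbar (E : Rbar -> Prop) (l : Rbar) : Prop :=
  (forall x, E x -> Rbar_le x l) /\
  (forall m, (forall x, E x -> Rbar_le x m) -> Rbar_le l m).

Definition Rbar_inf (E : Rbar -> Prop) : Rbar :=
  epsilon (inhabits m_infty) (is_glb_Rbar E).
Definition Rbar_sup (E : Rbar -> Prop) : Rbar :=
  epsilon (inhabits p_infty) (is_lub_Rbar E).

Definition is_lim_Rbar (u : nat -> Rbar) (l : Rbar) : Prop :=
  match l with
  | Finite a => forall eps, 0 < eps -> exists N, forall n, (N <= n)%nat ->
                  exists r, u n = Finite r /\ Rabs (r - a) < eps
  | p_infty => forall M, exists N, forall n, (N <= n)%nat ->
                  Rbar_le (Finite M) (u n) /\ u n <> Finite M
  | m_infty => forall M, exists N, forall n, (N <= n)%nat ->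
                  Rbar_le (u n) (Finite M) /\ u n <> Finite M
  end.
Definition Lim (u : nat -> Rbar) : Rbar :=
  epsilon (inhabits p_infty) (is_lim_Rbar u).

Definition real_part (x : Rbar) : R :=
  match x with Finite r => r | _ => 0 end.

Definition summable (v : nat -> R) : Prop :=
  exists l, Un_cv (fun N => sum_f_R0 v N) l.

Fixpoint sumk (g : nat -> R) (k : nat) : R :=
  match k with O => 0 | S k' => sumk g k' + g k' end.

Definition Sigma := nat -> bool.          (* false = 0, true = 1 *)
Definition shiftn (k : nat) (x : Sigma) : Sigma := fun j => x (k + j)%nat.
Definition agree (n : nat) (x y : Sigma) : Prop :=
  forall j, (j < n)%nat -> x j = y j.
Definition zeros : Sigma := fun _ => false.
Definition ones  : Sigma := fun _ => true.

Definition continuous_Sigma (H : Sigma -> R) : Prop :=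
  forall x eps, 0 < eps -> exists n, forall y, agree n x y -> Rabs (H x - H y) < eps.

Definition var (H : Sigma -> R) (n : nat) : Rbar :=
  Rbar_sup (fun r => exists x y, agree n x y /\ r = Finite (Rabs (H x - H y))).

Definition tail_osc (Hs : nat -> R) (k : nat) : Rbar :=
  Rbar_sup (fun r => exists n, r = Finite (Rabs (Hs k - Hs (k + n)%nat))).

(* reduced double-well type potential, with H = Hs0 n on [0 1^n 0], H = Hs1 n on [1 0^n 1] *)
Definition reduced_double_well (H : Sigma -> R) (Hs0 Hs1 : nat -> R) : Prop :=
  continuous_Sigma H /\
  (forall x, 0 <= H x) /\
  (exists v : nat -> R, (forall n, var H n = Finite (v n)) /\ summable v) /\
  (forall x, x 0%nat = x 1%nat -> H x = 0) /\
  (forall n x, (1 <= n)%nat -> x 0%nat = false ->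
     (forall j, (1 <= j <= n)%nat -> x j = true) -> x (S n) = false -> H x = Hs0 n) /\
  (forall n x, (1 <= n)%nat -> x 0%nat = true ->
     (forall j, (1 <= j <= n)%nat -> x j = false) -> x (S n) = true -> H x = Hs1 n) /\
  (forall n, (1 <= n)%nat -> 0 < Hs0 n) /\
  (forall n, (1 <= n)%nat -> 0 < Hs1 n) /\
  (exists v : nat -> R, (forall k, (1 <= k)%nat -> tail_osc Hs0 k = Finite (v k)) /\
                        summable (fun k => v (S k))) /\
  (exists v : nat -> R, (forall k, (1 <= k)%nat -> tail_osc Hs1 k = Finite (v k)) /\
                        summable (fun k => v (S k))).

Definition H_infty (Hs : nat -> R) : Rbar := Lim (fun n => Finite (Hs n)).
Definition H_min (Hs : nat -> R) : Rbar :=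
  Rbar_inf (fun r => exists n, (1 <= n)%nat /\ r = Finite (Hs n)).
Definition H_inf_from (Hs : nat -> R) (n : nat) : Rbar :=
  Rbar_inf (fun r => exists k, (n <= k)%nat /\ r = Finite (Hs k)).

(* Hbar = lim_n inf_x (1/n) sum_{k<n} H(sigma^k x)  (indexed by n+1 to avoid n = 0) *)
Definition Hbar (H : Sigma -> R) : R :=
  real_part (Lim (fun n => Rbar_inf (fun r => exists x,
     r = Finite (sumk (fun k => H (shiftn k x)) (S n) / INR (S n))))).

Definition S_np (H : Sigma -> R) (n p : nat) (x y : Sigma) : Rbar :=
  Rbar_inf (fun r => exists k z, (n <= k)%nat /\ agree p z x /\ agree p (shiftn k z) y /\
       r = Finite (sumk (fun i => H (shiftn i z) - Hbar H) k)).

Definition peierls (H : Sigma -> R) (x y : Sigma) : Rbar :=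
  Lim (fun p => Lim (fun n => S_np H n p x y)).

(* liminf_{x -> a, x <> a} f x  (cylinders [a_0...a_{m-1}] as neighbourhood basis) *)
Definition liminf_punct (f : Sigma -> Rbar) (a : Sigma) : Rbar :=
  Rbar_sup (fun r => exists m, r = Rbar_inf (fun s => exists x, agree m x a /\ x <> a /\ s = f x)).

(* Since H >= 0 vanishes on [00] and [11], we have Hbar = 0 and the Birkhoff sum along an
   orbit segment only sees the places where a run of b's ends: if the following run of
   ¬b's has length j and is followed by b again, the cost is H_j^b; if it is longer than
   the window we look at, continuity makes the cost close to H(b(¬b)^∞) = H_∞^b.
   Upper bounds for h come from explicit orbits making one transition (items 1, 2, 4, 5)
   or an excursion b^m (¬b)^j b^∞ making two (items 3, 6); lower bounds come from locating
   the transitions that the boundary conditions force on every admissible orbit. *)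

From Stdlib Require Import Reals Lra Lia ClassicalEpsilon Classical FunctionalExtensionality Bool.
Open Scope R_scope.

Lemma Rbar_le_refl x : Rbar_le x x.
Proof. destruct x; simpl; auto; lra. Qed.

Lemma Rbar_le_trans x y z : Rbar_le x y -> Rbar_le y z -> Rbar_le x z.
Proof. destruct x, y, z; simpl; auto; try lra; tauto. Qed.

Lemma Rbar_le_antisym x y : Rbar_le x y -> Rbar_le y x -> x = y.
Proof. destruct x, y; simpl; intros; try tauto; f_equal; lra. Qed.

Lemma Rbar_not_le x y : ~ Rbar_le x y -> Rbar_le y x /\ x <> y.
Proof.
  destruct x as [a| |], y as [b| |]; simpl; intros Hn; split; try discriminate; try tauto;
    try lra.
  intro E; injection E; lra.
Qed.

Lemma Rbar_le_epsilon a x :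
  (forall eps, 0 < eps -> Rbar_le (Finite (a - eps)) x) -> Rbar_le (Finite a) x.
Proof.
  intros Hx. destruct x as [r| |]; simpl in *; auto.
  - apply Rnot_lt_le. intro Hr. specialize (Hx ((a - r) / 2) ltac:(lra)). lra.
  - apply (Hx 1). lra.
Qed.

Lemma lub_exists E : exists l, is_lub_Rbar E l.
Proof.
  destruct (classic (E p_infty)) as [Hp|Hp].
  { exists p_infty. split; [intros [] _; simpl; auto|]. intros m Hm. apply Hm, Hp. }
  destruct (classic (exists r, E (Finite r))) as [[r0 Hr0]|Hno].
  2: { exists m_infty. split.
       - intros [r| |] Hx; simpl; [apply Hno; eauto | apply Hp, Hx | exact I].
       - intros m _. exact I. }
  destruct (classic (exists ub, forall r, E (Finite r) -> r <= ub)) as [[ub Hub]|Hunb].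
  - assert (Hbound : bound (fun r => E (Finite r))) by (exists ub; exact Hub).
    destruct (completeness _ Hbound (ex_intro _ r0 Hr0)) as [s [Hs1 Hs2]].
    exists (Finite s). split.
    + intros [r| |] Hx; simpl; [apply Hs1, Hx | apply Hp, Hx | exact I].
    + intros [r| |] Hm; simpl; auto.
      * apply Hs2. intros t Ht. exact (Hm _ Ht).
      * exact (Hm _ Hr0).
  - exists p_infty. split; [intros [] _; simpl; auto|].
    intros [r| |] Hm; simpl; auto.
    + apply Hunb. exists r. intros t Ht. exact (Hm _ Ht).
    + exact (Hm _ Hr0).
Qed.

Definition Rbar_opp (x : Rbar) : Rbar :=
  match x with Finite r => Finite (- r) | p_infty => m_infty | m_infty => p_infty end.

Lemma Rbar_opp_involutive x : Rbar_opp (Rbar_opp x) = x.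
Proof. destruct x; simpl; auto. rewrite Ropp_involutive. reflexivity. Qed.

Lemma Rbar_le_opp x y : Rbar_le (Rbar_opp x) (Rbar_opp y) -> Rbar_le y x.
Proof. destruct x, y; simpl; auto; lra. Qed.

Lemma glb_exists E : exists l, is_glb_Rbar E l.
Proof.
  destruct (lub_exists (fun x => E (Rbar_opp x))) as [l [Hub Hleast]].
  exists (Rbar_opp l). split.
  - intros x Hx. apply Rbar_le_opp. rewrite Rbar_opp_involutive.
    apply Hub. rewrite Rbar_opp_involutive. exact Hx.
  - intros m Hm. apply Rbar_le_opp. rewrite Rbar_opp_involutive.
    apply Hleast. intros y Hy. apply Rbar_le_opp. rewrite Rbar_opp_involutive. apply Hm, Hy.
Qed.

Lemma Rbar_inf_glb E : is_glb_Rbar E (Rbar_inf E).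
Proof. exact (epsilon_spec (inhabits m_infty) _ (glb_exists E)). Qed.

Lemma Rbar_inf_lb E x : E x -> Rbar_le (Rbar_inf E) x.
Proof. apply (proj1 (Rbar_inf_glb E)). Qed.

Lemma Rbar_inf_ge E m : (forall x, E x -> Rbar_le m x) -> Rbar_le m (Rbar_inf E).
Proof. apply (proj2 (Rbar_inf_glb E)). Qed.

Lemma Rbar_inf_finite E r0 lb :
  E (Finite r0) -> (forall x, E x -> Rbar_le (Finite lb) x) -> exists r, Rbar_inf E = Finite r.
Proof.
  intros Hr0 Hlb.
  assert (L : Rbar_le (Finite lb) (Rbar_inf E)) by (apply Rbar_inf_ge, Hlb).
  assert (U : Rbar_le (Rbar_inf E) (Finite r0)) by (apply Rbar_inf_lb, Hr0).
  destruct (Rbar_inf E) as [r| |]; simpl in L, U; try tauto. eauto.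
Qed.

Lemma Rbar_sup_eq E l : is_lub_Rbar E l -> Rbar_sup E = l.
Proof.
  intros [Hub Hleast]. destruct (epsilon_spec (inhabits p_infty) _ (lub_exists E)) as [Hub' Hleast'].
  apply Rbar_le_antisym; [apply Hleast' | apply Hleast]; assumption.
Qed.

Lemma H_min_le (Hs : nat -> R) hm j : H_min Hs = Finite hm -> (1 <= j)%nat -> hm <= Hs j.
Proof.
  intros Ehm Hj. assert (L : Rbar_le (H_min Hs) (Finite (Hs j))) by (apply Rbar_inf_lb; eauto).
  rewrite Ehm in L. exact L.
Qed.

Lemma Rbar_le_H_min_plus (Hs : nat -> R) hm t v : H_min Hs = Finite hm ->
  (forall j, Rbar_le v (Finite (Hs (S j) + t))) -> Rbar_le v (Finite (hm + t)).
Proof.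
  intros Ehm Hv. destruct v as [r| |]; simpl in *; auto.
  - assert (L : Rbar_le (Finite (r - t)) (H_min Hs)).
    { apply Rbar_inf_ge. intros s (n & Hn & ->). simpl.
      specialize (Hv (n - 1)%nat). replace (S (n - 1)) with n in Hv by lia. lra. }
    rewrite Ehm in L. simpl in L. lra.
  - exact (Hv 0%nat).
Qed.

Lemma is_lim_below u l t : is_lim_Rbar u l -> Rbar_le l (Finite t) -> l <> Finite t ->
  exists N, forall n, (N <= n)%nat -> Rbar_le (u n) (Finite t) /\ u n <> Finite t.
Proof.
  destruct l as [a| |]; simpl; intros Hl Hle Hne; try tauto.
  - assert (Hat : a < t) by (destruct (Rle_lt_or_eq_dec a t Hle); [assumption | congruence]).
    destruct (Hl (t - a)) as [N HN]; [lra|]. exists N. intros n Hn.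
    destruct (HN n Hn) as [r [-> Hr]]. apply Rabs_def2 in Hr.
    simpl. split; [lra | intro E; injection E; lra].
  - apply Hl.
Qed.

Lemma is_lim_above u l t : is_lim_Rbar u l -> Rbar_le (Finite t) l -> l <> Finite t ->
  exists N, forall n, (N <= n)%nat -> Rbar_le (Finite t) (u n) /\ u n <> Finite t.
Proof.
  destruct l as [a| |]; simpl; intros Hl Hle Hne; try tauto.
  - assert (Hta : t < a) by (destruct (Rle_lt_or_eq_dec t a Hle); [assumption | congruence]).
    destruct (Hl (a - t)) as [N HN]; [lra|]. exists N. intros n Hn.
    destruct (HN n Hn) as [r [-> Hr]]. apply Rabs_def2 in Hr.
    simpl. split; [lra | intro E; injection E; lra].
  - apply Hl.
Qed.

Lemma Rbar_between l1 l2 : Rbar_le l1 l2 -> l1 <> l2 -> exists t,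
  Rbar_le l1 (Finite t) /\ l1 <> Finite t /\ Rbar_le (Finite t) l2 /\ l2 <> Finite t.
Proof.
  destruct l1 as [a| |], l2 as [b| |]; simpl; intros Hle Hne; try tauto; try congruence.
  - assert (a < b) by (destruct (Rle_lt_or_eq_dec a b Hle); [assumption | congruence]).
    exists ((a + b) / 2). repeat split; try lra; intro E; injection E; lra.
  - exists (a + 1). repeat split; try lra; try discriminate. intro E; injection E; lra.
  - exists (b - 1). repeat split; try lra; try discriminate. intro E; injection E; lra.
  - exists 0. repeat split; discriminate.
Qed.

Lemma lim_strict_absurd u l1 l2 :
  is_lim_Rbar u l1 -> is_lim_Rbar u l2 -> Rbar_le l1 l2 -> l1 <> l2 -> False.
Proof.
  intros H1 H2 Hle Hne.
  destruct (Rbar_between l1 l2 Hle Hne) as (t & Le1 & Ne1 & Le2 & Ne2).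
  destruct (is_lim_below u l1 t H1 Le1 Ne1) as [N1 HN1].
  destruct (is_lim_above u l2 t H2 Le2 Ne2) as [N2 HN2].
  destruct (HN1 (N1 + N2)%nat) as [A B]; [lia|].
  destruct (HN2 (N1 + N2)%nat) as [C _]; [lia|].
  exact (B (Rbar_le_antisym _ _ A C)).
Qed.

Lemma lim_unique u l1 l2 : is_lim_Rbar u l1 -> is_lim_Rbar u l2 -> l1 = l2.
Proof.
  intros H1 H2. apply NNPP. intro Hne.
  destruct (classic (Rbar_le l1 l2)) as [Hle|Hle].
  - exact (lim_strict_absurd u l1 l2 H1 H2 Hle Hne).
  - destruct (Rbar_not_le _ _ Hle) as [Hge _].
    exact (lim_strict_absurd u l2 l1 H2 H1 Hge (fun E => Hne (eq_sym E))).
Qed.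

Lemma Lim_eq u l : is_lim_Rbar u l -> Lim u = l.
Proof. intros Hl. apply (lim_unique u); [unfold Lim; apply epsilon_spec; eauto | exact Hl]. Qed.

Lemma Rbar_le_mono u : (forall n, Rbar_le (u n) (u (S n))) ->
  forall n m, (n <= m)%nat -> Rbar_le (u n) (u m).
Proof.
  intros Hu n m Hnm. induction Hnm; [apply Rbar_le_refl | eapply Rbar_le_trans; eauto].
Qed.

Lemma is_lim_nondecreasing u l : (forall n, Rbar_le (u n) (u (S n))) ->
  is_lub_Rbar (fun r => exists n, r = u n) l -> is_lim_Rbar u l.
Proof.
  intros Hu [Hub Hleast].
  assert (Hev : forall t, ~ Rbar_le l (Finite t) ->
            exists N, forall n, (N <= n)%nat -> ~ Rbar_le (u n) (Finite t)).
  { intros t Ht. apply NNPP. intro Hno. apply Ht, Hleast. intros r [n ->].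
    apply NNPP. intro Hn. apply Hno. exists n. intros m Hm Hum.
    apply Hn, (Rbar_le_trans _ (u m)); [apply Rbar_le_mono|]; assumption. }
  destruct l as [a| |]; simpl.
  - intros eps Heps. destruct (Hev (a - eps)) as [N HN]; [simpl; lra|].
    exists N. intros n Hn. specialize (HN n Hn).
    assert (Ha : Rbar_le (u n) (Finite a)) by (apply Hub; eauto).
    destruct (u n) as [r| |]; simpl in HN, Ha; try tauto.
    exists r. split; [reflexivity | apply Rabs_def1; lra].
  - intros M. destruct (Hev M) as [N HN]; [simpl; auto|].
    exists N. intros n Hn. exact (Rbar_not_le _ _ (HN n Hn)).
  - intros M. exists 0%nat. intros n _.
    assert (Hm : Rbar_le (u n) m_infty) by (apply Hub; eauto).
    destruct (u n); simpl in Hm; try tauto. split; [exact I | discriminate].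
Qed.

Lemma Lim_nondecreasing u : (forall n, Rbar_le (u n) (u (S n))) ->
  is_lub_Rbar (fun r => exists n, r = u n) (Lim u).
Proof.
  intros Hu. destruct (lub_exists (fun r => exists n, r = u n)) as [l Hl].
  rewrite (Lim_eq u l); [exact Hl | apply is_lim_nondecreasing; assumption].
Qed.

Lemma sumk_ext g g' k : (forall i, (i < k)%nat -> g i = g' i) -> sumk g k = sumk g' k.
Proof.
  induction k as [|k IH]; simpl; intros Hg; [reflexivity|].
  rewrite IH by (intros; apply Hg; lia). rewrite Hg by lia. reflexivity.
Qed.

Lemma sumk_zero g k : (forall i, (i < k)%nat -> g i = 0) -> sumk g k = 0.
Proof.
  induction k as [|k IH]; simpl; intros Hg; [reflexivity|].
  rewrite IH by (intros; apply Hg; lia). rewrite Hg by lia. ring.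
Qed.

Lemma sumk_nonneg g k : (forall i, (i < k)%nat -> 0 <= g i) -> 0 <= sumk g k.
Proof.
  induction k as [|k IH]; simpl; intros Hg; [lra|].
  assert (0 <= g k) by (apply Hg; lia).
  assert (0 <= sumk g k) by (apply IH; intros; apply Hg; lia). lra.
Qed.

Lemma sumk_add g m n : sumk g (m + n) = sumk g m + sumk (fun i => g (m + i)%nat) n.
Proof.
  induction n as [|n IH]; simpl; [rewrite Nat.add_0_r; ring|].
  rewrite Nat.add_succ_r. simpl. rewrite IH. ring.
Qed.

Lemma sumk_ge_term g k a : (forall i, (i < k)%nat -> 0 <= g i) -> (a < k)%nat -> g a <= sumk g k.
Proof.
  induction k as [|k IH]; simpl; intros Hg Ha; [lia|].
  destruct (Nat.eq_dec a k) as [->|Hne].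
  - assert (0 <= sumk g k) by (apply sumk_nonneg; intros; apply Hg; lia). lra.
  - assert (g a <= sumk g k) by (apply IH; [intros; apply Hg|]; lia).
    assert (0 <= g k) by (apply Hg; lia). lra.
Qed.

Lemma sumk_ge_two_terms g k a c : (forall i, (i < k)%nat -> 0 <= g i) ->
  (a < c)%nat -> (c < k)%nat -> g a + g c <= sumk g k.
Proof.
  induction k as [|k IH]; simpl; intros Hg Hac Hc; [lia|].
  destruct (Nat.eq_dec c k) as [->|Hne].
  - assert (g a <= sumk g k) by (apply sumk_ge_term; [intros; apply Hg|]; lia). lra.
  - assert (g a + g c <= sumk g k) by (apply IH; [intros; apply Hg| |]; lia).
    assert (0 <= g k) by (apply Hg; lia). lra.
Qed.

Lemma neq_negb (b c : bool) : b <> c -> b = negb c.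
Proof. destruct b, c; simpl; congruence. Qed.

Definition cst (b : bool) : Sigma := fun _ => b.

Lemma exists_neq_cst (x : Sigma) b : x <> cst b -> exists t, x t = negb b.
Proof.
  intros Hne. apply NNPP. intro Hno. apply Hne, functional_extensionality. intro t.
  apply NNPP. intro Ht. apply Hno. exists t. apply neq_negb, Ht.
Qed.

Lemma shiftn_add m n z : shiftn (m + n) z = shiftn n (shiftn m z).
Proof. apply functional_extensionality. intro j. unfold shiftn. f_equal. lia. Qed.

Definition prepend (n : nat) (b : bool) (x : Sigma) : Sigma :=
  fun i => if (i <? n)%nat then b else x (i - n)%nat.

Definition switch_point (b : bool) : Sigma := prepend 1 b (cst (negb b)).

Lemma prepend_lt n b x i : (i < n)%nat -> prepend n b x i = b.
Proof. intros Hi. unfold prepend. destruct (Nat.ltb_spec i n); [reflexivity | lia]. Qed.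

Lemma prepend_ge n b x i : (n <= i)%nat -> prepend n b x i = x (i - n)%nat.
Proof. intros Hi. unfold prepend. destruct (Nat.ltb_spec i n); [lia | reflexivity]. Qed.

Lemma prepend_run d c x n : (forall i, (i < n)%nat -> x i = c) ->
  forall i, (i < d + n)%nat -> prepend d c x i = c.
Proof.
  intros Hx i Hi. destruct (Nat.lt_ge_cases i d).
  - apply prepend_lt. assumption.
  - rewrite prepend_ge by assumption. apply Hx. lia.
Qed.

Lemma shiftn_prepend m n b x : shiftn m (prepend (m + n) b x) = prepend n b x.
Proof.
  apply functional_extensionality. intro j. unfold shiftn, prepend.
  destruct (Nat.ltb_spec (m + j) (m + n)), (Nat.ltb_spec j n); try lia; [reflexivity|].
  f_equal. lia.
Qed.

Lemma shiftn_prepend_all n b x : shiftn n (prepend n b x) = x.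
Proof.
  apply functional_extensionality. intro j. unfold shiftn.
  rewrite prepend_ge by lia. f_equal. lia.
Qed.

Lemma last_occurrence (z : Sigma) c s t : z s = c -> (s <= t)%nat ->
  exists a, (s <= a <= t)%nat /\ z a = c /\ forall i, (a < i <= t)%nat -> z i = negb c.
Proof.
  intros Hs. induction t as [|t IH]; intros Hst.
  - exists s. split; [lia|]. split; [assumption|]. intros; lia.
  - destruct (bool_dec (z (S t)) c) as [E|E].
    + exists (S t). split; [lia|]. split; [assumption|]. intros; lia.
    + destruct (Nat.eq_dec s (S t)) as [->|Hne]; [congruence|].
      destruct IH as (a & Ha & Za & Hi); [lia|].
      exists a. split; [lia|]. split; [assumption|]. intros i Hi'.
      destruct (Nat.eq_dec i (S t)) as [->|]; [apply neq_negb, E | apply Hi; lia].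
Qed.

Lemma last_switch (z : Sigma) c s k q : z s = c -> (s <= k)%nat ->
  (forall i, (k <= i <= k + q)%nat -> z i = negb c) ->
  exists a, (s <= a < k)%nat /\ z a = c /\ forall i, (a < i <= k + q)%nat -> z i = negb c.
Proof.
  intros Hs Hsk Hk.
  destruct (last_occurrence z c s (k + q) Hs) as (a & Ha & Za & Hi); [lia|].
  exists a. split; [split; [lia|] | split; assumption].
  destruct (Nat.lt_ge_cases a k) as [|Hka]; [assumption|].
  rewrite Hk in Za by lia. destruct (no_fixpoint_negb _ Za).
Qed.

Lemma first_switch (z : Sigma) c s t : z s = c -> z t = negb c -> (s <= t)%nat ->
  exists e, (s < e <= t)%nat /\ z e = negb c /\ forall i, (s <= i < e)%nat -> z i = c.
Proof.
  intros Hs Ht. remember (t - s)%nat as d eqn:Hd. revert s Hs Hd.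
  induction d as [|d IH]; intros s Hs Hd Hst.
  - replace t with s in Ht by lia. rewrite Hs in Ht.
    destruct (no_fixpoint_negb _ (eq_sym Ht)).
  - destruct (bool_dec (z (S s)) c) as [E|E].
    + destruct (IH (S s)) as (e & He & Ze & Hi); [assumption | lia | lia |].
      exists e. split; [lia|]. split; [assumption|]. intros i Hi'.
      destruct (Nat.eq_dec i s) as [->|]; [assumption | apply Hi; lia].
    + exists (S s). split; [lia|]. split; [apply neq_negb, E|].
      intros i Hi. replace i with s by lia. assumption.
Qed.

(** * The Peierls barrier as an iterated supremum *)

Lemma S_np_le_S_n H n p x y : Rbar_le (S_np H n p x y) (S_np H (S n) p x y).
Proof.
  apply Rbar_inf_ge. intros r (k & z & Hk & Hx & Hy & ->).
  apply Rbar_inf_lb. exists k, z. split; [lia|]. auto.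
Qed.

Lemma S_np_le_S_p H n p x y : Rbar_le (S_np H n p x y) (S_np H n (S p) x y).
Proof.
  apply Rbar_inf_ge. intros r (k & z & Hk & Hx & Hy & ->).
  apply Rbar_inf_lb. exists k, z. split; [assumption|].
  split; [|split; [|reflexivity]]; intros j Hj; [apply Hx | apply Hy]; lia.
Qed.

Lemma Lim_S_np_lub H p x y :
  is_lub_Rbar (fun r => exists n, r = S_np H n p x y) (Lim (fun n => S_np H n p x y)).
Proof. apply Lim_nondecreasing. intro n. apply S_np_le_S_n. Qed.

Lemma peierls_lub H x y :
  is_lub_Rbar (fun r => exists p, r = Lim (fun n => S_np H n p x y)) (peierls H x y).
Proof.
  apply Lim_nondecreasing. intro p. apply (proj2 (Lim_S_np_lub H p x y)).
  intros r [n ->]. apply (Rbar_le_trans _ (S_np H n (S p) x y)); [apply S_np_le_S_p|].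
  apply (proj1 (Lim_S_np_lub H (S p) x y)). eauto.
Qed.

Lemma S_np_le_peierls H n p x y : Rbar_le (S_np H n p x y) (peierls H x y).
Proof.
  apply (Rbar_le_trans _ (Lim (fun n => S_np H n p x y))).
  - apply (proj1 (Lim_S_np_lub H p x y)). eauto.
  - apply (proj1 (peierls_lub H x y)). eauto.
Qed.

Lemma peierls_le H x y c :
  (forall n p, Rbar_le (S_np H n p x y) c) -> Rbar_le (peierls H x y) c.
Proof.
  intros Hc. apply (proj2 (peierls_lub H x y)). intros r [p ->].
  apply (proj2 (Lim_S_np_lub H p x y)). intros r [n ->]. apply Hc.
Qed.

Definition punctured_inf (f : Sigma -> Rbar) (a : Sigma) (m : nat) : Rbar :=
  Rbar_inf (fun s => exists x, agree m x a /\ x <> a /\ s = f x).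

(** * Double-well potentials *)

Section DoubleWell.

Variable H : Sigma -> R.
Variable Hs : bool -> nat -> R.
Hypothesis H_continuous : continuous_Sigma H.
Hypothesis H_nonneg : forall x, 0 <= H x.
Hypothesis H_flat : forall x, x 0%nat = x 1%nat -> H x = 0.
Hypothesis H_block : forall b n x, (1 <= n)%nat -> x 0%nat = b ->
  (forall j, (1 <= j <= n)%nat -> x j = negb b) -> x (S n) = b -> H x = Hs b n.

Definition birkhoff_sum (z : Sigma) (k : nat) : R := sumk (fun i => H (shiftn i z)) k.

Lemma birkhoff_sum_nonneg z k : 0 <= birkhoff_sum z k.
Proof. apply sumk_nonneg. intros. apply H_nonneg. Qed.

Lemma birkhoff_sum_ge_term z k a : (a < k)%nat -> H (shiftn a z) <= birkhoff_sum z k.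
Proof. intros Ha. apply (sumk_ge_term (fun i => H (shiftn i z))); [intros; apply H_nonneg | exact Ha]. Qed.

Lemma birkhoff_sum_ge_two_terms z k a c : (a < c)%nat -> (c < k)%nat ->
  H (shiftn a z) + H (shiftn c z) <= birkhoff_sum z k.
Proof.
  intros Hac Hc. apply (sumk_ge_two_terms (fun i => H (shiftn i z))); [intros; apply H_nonneg | |];
    assumption.
Qed.

Lemma birkhoff_sum_add z m n :
  birkhoff_sum z (m + n) = birkhoff_sum z m + birkhoff_sum (shiftn m z) n.
Proof.
  unfold birkhoff_sum. rewrite sumk_add. f_equal.
  apply sumk_ext. intros i _. rewrite shiftn_add. reflexivity.
Qed.

Lemma birkhoff_sum_const_run z c k : (forall i, (i <= k)%nat -> z i = c) -> birkhoff_sum z k = 0.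
Proof.
  intros Hz. apply sumk_zero. intros i Hi. apply H_flat. unfold shiftn.
  rewrite !Hz by lia. reflexivity.
Qed.

Lemma birkhoff_sum_prepend K b y d :
  birkhoff_sum (prepend (S K) b y) (S K + d) = H (prepend 1 b y) + birkhoff_sum y d.
Proof.
  replace (S K + d)%nat with (K + (1 + d))%nat by lia.
  replace (S K) with (K + 1)%nat by lia.
  rewrite birkhoff_sum_add, shiftn_prepend, birkhoff_sum_add, shiftn_prepend_all.
  rewrite (birkhoff_sum_const_run _ b K) by (intros i Hi; apply prepend_lt; lia).
  change (birkhoff_sum (prepend 1 b y) 1) with (0 + H (prepend 1 b y)). ring.
Qed.

Lemma H_shiftn_block b z a j : (1 <= j)%nat -> z a = b ->
  (forall i, (a < i <= a + j)%nat -> z i = negb b) -> z (a + S j)%nat = b ->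
  H (shiftn a z) = Hs b j.
Proof.
  intros Hj Za Hrun Zend. apply H_block; unfold shiftn.
  - exact Hj.
  - rewrite Nat.add_0_r. exact Za.
  - intros i Hi. apply Hrun. lia.
  - exact Zend.
Qed.

Lemma H_prepend_block b y j : (1 <= j)%nat -> (forall i, (i < j)%nat -> y i = negb b) ->
  y j = b -> H (prepend 1 b y) = Hs b j.
Proof.
  intros Hj Hrun Hend. change (prepend 1 b y) with (shiftn 0 (prepend 1 b y)).
  apply H_shiftn_block; [exact Hj | reflexivity | |].
  - intros i Hi. rewrite prepend_ge by lia. apply Hrun. lia.
  - rewrite prepend_ge by lia. replace (0 + S j - 1)%nat with j by lia. exact Hend.
Qed.

Lemma H_single_excursion b j : (1 <= j)%nat ->
  H (prepend 1 b (prepend j (negb b) (cst b))) = Hs b j.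
Proof.
  intros Hj. apply H_prepend_block; [exact Hj | intros i Hi; apply prepend_lt, Hi |].
  rewrite prepend_ge by lia. reflexivity.
Qed.

Lemma Hs_nonneg b j : (1 <= j)%nat -> 0 <= Hs b j.
Proof. intros Hj. rewrite <- (H_single_excursion b j Hj). apply H_nonneg. Qed.

Lemma H_min_finite b : exists hm, H_min (Hs b) = Finite hm.
Proof.
  apply (Rbar_inf_finite _ (Hs b 1%nat) 0); [eauto|].
  intros r (n & Hn & ->). apply Hs_nonneg, Hn.
Qed.

Lemma H_infty_eq b : H_infty (Hs b) = Finite (H (switch_point b)).
Proof.
  apply Lim_eq. intros eps Heps.
  destruct (H_continuous (switch_point b) eps Heps) as [N HN].
  exists (S N). intros n Hn. exists (Hs b n). split; [reflexivity|].
  rewrite <- (H_single_excursion b n) by lia. rewrite Rabs_minus_sym. apply HN.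
  intros [|i] Hi; [reflexivity|]. unfold switch_point.
  rewrite (prepend_ge 1), (prepend_ge 1), prepend_lt by lia. reflexivity.
Qed.

Lemma H_shiftn_near_switch c eps : 0 < eps -> exists N, forall z a,
  z a = c -> (forall i, (a < i <= a + N)%nat -> z i = negb c) ->
  H (switch_point c) - eps < H (shiftn a z).
Proof.
  intros Heps. destruct (H_continuous (switch_point c) eps Heps) as [N HN].
  exists N. intros z a Za Hrun.
  assert (Hagree : agree N (switch_point c) (shiftn a z)).
  { intros [|i] Hi; unfold shiftn.
    - rewrite Nat.add_0_r, Za. reflexivity.
    - rewrite Hrun by lia. unfold switch_point. rewrite prepend_ge by lia. reflexivity. }
  specialize (HN _ Hagree). apply Rabs_def2 in HN. lra.
Qed.

Lemma Hbar_eq0 : Hbar H = 0.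
Proof.
  assert (Hinf : forall n, Rbar_inf (fun r => exists x,
            r = Finite (sumk (fun k => H (shiftn k x)) (S n) / INR (S n))) = Finite 0).
  { intro n. apply Rbar_le_antisym.
    - apply Rbar_inf_lb. exists (cst false).
      rewrite sumk_zero by (intros; apply H_flat; reflexivity). f_equal. unfold Rdiv. ring.
    - apply Rbar_inf_ge. intros r [x ->]. unfold Rbar_le, Rdiv. apply Rmult_le_pos.
      + apply (birkhoff_sum_nonneg x (S n)).
      + apply Rlt_le, Rinv_0_lt_compat, lt_0_INR. lia. }
  unfold Hbar. rewrite (Lim_eq _ (Finite 0)); [reflexivity|].
  intros eps Heps. exists 0%nat. intros n _. exists 0.
  split; [apply Hinf | rewrite Rminus_0_r, Rabs_R0; exact Heps].
Qed.

Lemma sumk_normalized z k : sumk (fun i => H (shiftn i z) - Hbar H) k = birkhoff_sum z k.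
Proof. apply sumk_ext. intros i _. rewrite Hbar_eq0. ring. Qed.

Lemma peierls_le_orbits x y c :
  (forall n p, exists k z, (n <= k)%nat /\ agree p z x /\ shiftn k z = y /\ birkhoff_sum z k = c) ->
  Rbar_le (peierls H x y) (Finite c).
Proof.
  intros Horb. apply peierls_le. intros n p.
  destruct (Horb n p) as (k & z & Hk & Hx & Hy & Hc).
  apply Rbar_inf_lb. exists k, z. split; [exact Hk|]. split; [exact Hx|]. split.
  - rewrite Hy. intros j _. reflexivity.
  - rewrite sumk_normalized, Hc. reflexivity.
Qed.

Lemma le_peierls_orbits x y c p :
  (forall k z, agree p z x -> agree p (shiftn k z) y -> Rbar_le c (Finite (birkhoff_sum z k))) ->
  Rbar_le c (peierls H x y).
Proof.
  intros Horb. apply (Rbar_le_trans _ (S_np H 0 p x y)); [|apply S_np_le_peierls].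
  apply Rbar_inf_ge. intros r (k & z & _ & Hx & Hy & ->).
  rewrite sumk_normalized. apply Horb; assumption.
Qed.

Lemma peierls_nonneg x y : Rbar_le (Finite 0) (peierls H x y).
Proof. apply (le_peierls_orbits x y _ 0). intros k z _ _. apply birkhoff_sum_nonneg. Qed.

(* The orbit b^K y with K arbitrarily large. *)
Lemma peierls_cst_le b y d x : shiftn d y = x ->
  Rbar_le (peierls H (cst b) x) (Finite (H (prepend 1 b y) + birkhoff_sum y d)).
Proof.
  intros Hyx. apply peierls_le_orbits. intros n p.
  exists (S (n + p) + d)%nat, (prepend (S (n + p)) b y). split; [lia|]. split.
  - intros j Hj. apply prepend_lt. lia.
  - split; [|apply birkhoff_sum_prepend].
    rewrite shiftn_add, shiftn_prepend_all. exact Hyx.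
Qed.

Lemma peierls_cst_start b x : x 0%nat = b -> peierls H (cst b) x = Finite 0.
Proof.
  intros Hx0. apply Rbar_le_antisym; [|apply peierls_nonneg].
  apply (Rbar_le_trans _ _ _ (peierls_cst_le b x 0 x eq_refl)). simpl.
  rewrite H_flat by (symmetry; exact Hx0). unfold birkhoff_sum. simpl. lra.
Qed.

Lemma peierls_cst_block b n x : (1 <= n)%nat -> (forall j, (j < n)%nat -> x j = negb b) ->
  x n = b -> peierls H (cst b) x = H_inf_from (Hs b) n.
Proof.
  intros Hn Hrun Hend. apply Rbar_le_antisym.
  - apply Rbar_inf_ge. intros r (j & Hj & ->).
    pose proof (prepend_run (j - n) (negb b) x n Hrun) as Hy.
    eapply Rbar_le_trans;
      [apply (peierls_cst_le b (prepend (j - n) (negb b) x) (j - n) x (shiftn_prepend_all _ _ _))|].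
    rewrite (birkhoff_sum_const_run _ (negb b)) by (intros i Hi; apply Hy; lia).
    rewrite (H_prepend_block b _ j); [simpl; lra | lia | intros i Hi; apply Hy; lia |].
    rewrite prepend_ge by lia. replace (j - (j - n))%nat with n by lia. exact Hend.
  - apply (le_peierls_orbits _ _ _ (S n)). intros k z Hz Hzk.
    assert (Zk : forall i, (i < S n)%nat -> z (k + i)%nat = x i) by exact Hzk.
    assert (Hx : forall i, (k <= i <= k + (n - 1))%nat -> z i = negb b).
    { intros i Hi. replace i with (k + (i - k))%nat by lia. rewrite Zk by lia. apply Hrun. lia. }
    destruct (last_switch z b 0 k (n - 1) (Hz 0%nat ltac:(lia)) (Nat.le_0_l k) Hx)
      as (a & Ha & Za & Hafter).
    apply (Rbar_le_trans _ (Finite (Hs b (k + n - 1 - a)))).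
    + apply Rbar_inf_lb. exists (k + n - 1 - a)%nat. split; [lia | reflexivity].
    + simpl. rewrite <- (H_shiftn_block b z a (k + n - 1 - a));
        [apply birkhoff_sum_ge_term; lia | lia | exact Za | intros i Hi; apply Hafter; lia |].
      replace (a + S (k + n - 1 - a))%nat with (k + n)%nat by lia. rewrite Zk by lia. exact Hend.
Qed.

Lemma peierls_cst_cst b : peierls H (cst b) (cst (negb b)) = Finite (H (switch_point b)).
Proof.
  apply Rbar_le_antisym.
  - eapply Rbar_le_trans; [apply (peierls_cst_le b (cst (negb b)) 0 _ eq_refl)|].
    unfold birkhoff_sum, switch_point. simpl. lra.
  - apply Rbar_le_epsilon. intros eps Heps.
    destruct (H_shiftn_near_switch b eps Heps) as [N HN].
    apply (le_peierls_orbits _ _ _ (S N)). intros k z Hz Hzk.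
    assert (Hx : forall i, (k <= i <= k + N)%nat -> z i = negb b).
    { intros i Hi. replace i with (k + (i - k))%nat by lia. apply (Hzk (i - k)%nat). lia. }
    destruct (last_switch z b 0 k N (Hz 0%nat ltac:(lia)) (Nat.le_0_l k) Hx)
      as (a & Ha & Za & Hafter).
    assert (Hcost : H (switch_point b) - eps < H (shiftn a z))
      by (apply HN; [exact Za | intros i Hi; apply Hafter; lia]).
    pose proof (birkhoff_sum_ge_term z k a ltac:(lia)). simpl. lra.
Qed.

Lemma peierls_excursion_le b m j :
  Rbar_le (peierls H (prepend (S m) b (prepend (S j) (negb b) (cst b))) (cst b))
          (Finite (Hs b (S j) + H (switch_point (negb b)))).
Proof.
  apply peierls_le_orbits. intros n p.
  exists (S m + (S j + n))%nat, (prepend (S m) b (prepend (S j) (negb b) (cst b))).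
  split; [lia|]. split; [intros i _; reflexivity|]. split.
  - rewrite !shiftn_add, !shiftn_prepend_all. reflexivity.
  - rewrite birkhoff_sum_prepend, birkhoff_sum_prepend, H_single_excursion by lia.
    rewrite (birkhoff_sum_const_run (cst b) b) by (intros; reflexivity).
    unfold switch_point. rewrite negb_involutive. ring.
Qed.

(* An orbit from near b^∞ leaving [b] must pay for a run of ¬b ending in b (at least H_min^b)
   and, to end in a long run of b, for a last switch from ¬b to b (about H_∞^{¬b}). *)
Lemma peierls_to_cst_ge b hm x : (forall j, (1 <= j)%nat -> hm <= Hs b j) ->
  x 0%nat = b -> x <> cst b ->
  Rbar_le (Finite (hm + H (switch_point (negb b)))) (peierls H x (cst b)).
Proof.
  intros Hhm Hx0 Hne. destruct (exists_neq_cst x b Hne) as [t Ht].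
  destruct (first_switch x b 0 t Hx0 Ht (Nat.le_0_l t)) as (m & Hm & Xm & Xbefore).
  apply Rbar_le_epsilon. intros eps Heps.
  destruct (H_shiftn_near_switch (negb b) eps Heps) as [N HN].
  apply (le_peierls_orbits _ _ _ (S (m + N))). intros k z Hz Hzk.
  assert (Zk : forall i, (i < S (m + N))%nat -> z (k + i)%nat = b) by exact Hzk.
  assert (Zm : z m = negb b) by (rewrite Hz by lia; exact Xm).
  assert (Hmk : (m < k)%nat).
  { destruct (Nat.lt_ge_cases m k) as [|Hkm]; [assumption|].
    replace m with (k + (m - k))%nat in Zm by lia. rewrite Zk in Zm by lia.
    destruct (no_fixpoint_negb _ (eq_sym Zm)). }
  assert (Zb : forall i, (k <= i <= k + N)%nat -> z i = negb (negb b)).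
  { intros i Hi. rewrite negb_involutive. replace i with (k + (i - k))%nat by lia. apply Zk. lia. }
  destruct (first_switch z (negb b) m k Zm (Zb k ltac:(lia)) (Nat.lt_le_incl _ _ Hmk))
    as (e & He & Ze & Zrun).
  rewrite negb_involutive in Ze.
  assert (Hblock : hm <= H (shiftn (m - 1) z)).
  { rewrite (H_shiftn_block b z (m - 1) (e - m)); [apply Hhm; lia | lia | | |].
    - rewrite Hz by lia. apply Xbefore. lia.
    - intros i Hi. apply Zrun. lia.
    - replace (m - 1 + S (e - m))%nat with e by lia. exact Ze. }
  destruct (last_switch z (negb b) m k N Zm (Nat.lt_le_incl _ _ Hmk) Zb) as (a & Ha & Za & Zafter).
  assert (Hcost : H (switch_point (negb b)) - eps < H (shiftn a z))
    by (apply HN; [exact Za | intros i Hi; apply Zafter; lia]).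
  pose proof (birkhoff_sum_ge_two_terms z k (m - 1) a ltac:(lia) ltac:(lia)). simpl. lra.
Qed.

Lemma punctured_inf_le b m hm : H_min (Hs b) = Finite hm ->
  Rbar_le (punctured_inf (fun x => peierls H x (cst b)) (cst b) m)
          (Finite (hm + H (switch_point (negb b)))).
Proof.
  intros Ehm. apply (Rbar_le_H_min_plus _ _ _ _ Ehm). intro j.
  eapply Rbar_le_trans; [|apply (peierls_excursion_le b m j)].
  apply Rbar_inf_lb. exists (prepend (S m) b (prepend (S j) (negb b) (cst b))).
  split; [intros i Hi; apply prepend_lt; lia|]. split; [|reflexivity].
  intro E. assert (Hd := f_equal (fun f : Sigma => f (S m)) E). cbv beta in Hd.
  rewrite prepend_ge, Nat.sub_diag, prepend_lt in Hd by lia.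
  exact (no_fixpoint_negb b Hd).
Qed.

Lemma liminf_peierls_to_cst b :
  liminf_punct (fun x => peierls H x (cst b)) (cst b) =
  Rbar_plus (H_min (Hs b)) (H_infty (Hs (negb b))).
Proof.
  destruct (H_min_finite b) as [hm Ehm]. rewrite Ehm, H_infty_eq. simpl.
  apply Rbar_sup_eq. split.
  - intros r [m ->]. exact (punctured_inf_le b m hm Ehm).
  - intros B HB.
    apply (Rbar_le_trans _ (punctured_inf (fun x => peierls H x (cst b)) (cst b) 1));
      [|apply HB; exists 1%nat; reflexivity].
    apply Rbar_inf_ge. intros s (x & Hx & Hne & ->).
    apply peierls_to_cst_ge; [intros j Hj; exact (H_min_le _ _ _ Ehm Hj) | apply Hx; lia | exact Hne].
Qed.

Lemma peierls_double_well b :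
  (forall x, x 0%nat = b -> peierls H (cst b) x = Finite 0) /\
  (forall n x, (1 <= n)%nat -> (forall j, (j < n)%nat -> x j = negb b) -> x n = b ->
      peierls H (cst b) x = H_inf_from (Hs b) n) /\
  peierls H (cst b) (cst (negb b)) = H_infty (Hs b) /\
  liminf_punct (fun x => peierls H x (cst b)) (cst b) =
    Rbar_plus (H_min (Hs b)) (H_infty (Hs (negb b))).
Proof.
  split; [exact (peierls_cst_start b)|]. split; [exact (peierls_cst_block b)|].
  split; [rewrite H_infty_eq; exact (peierls_cst_cst b) | exact (liminf_peierls_to_cst b)].
Qed.

End DoubleWell.

Theorem proposition3p3 (H : Sigma -> R) (Hs0 Hs1 : nat -> R) :
  reduced_double_well H Hs0 Hs1 ->
  (* 1 *)
  (forall x, x 0%nat = false -> peierls H zeros x = Finite 0) /\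
  (* 2 *)
  (forall n x, (1 <= n)%nat -> (forall j, (j < n)%nat -> x j = true) -> x n = false ->
      peierls H zeros x = H_inf_from Hs0 n) /\
  peierls H zeros ones = H_infty Hs0 /\
  (* 3 *)
  liminf_punct (fun x => peierls H x zeros) zeros = Rbar_plus (H_min Hs0) (H_infty Hs1) /\
  (* 4 *)
  (forall x, x 0%nat = true -> peierls H ones x = Finite 0) /\
  (* 5 *)
  (forall n x, (1 <= n)%nat -> (forall j, (j < n)%nat -> x j = false) -> x n = true ->
      peierls H ones x = H_inf_from Hs1 n) /\
  peierls H ones zeros = H_infty Hs1 /\
  (* 6 *)
  liminf_punct (fun x => peierls H x ones) ones = Rbar_plus (H_min Hs1) (H_infty Hs0).
Proof.
  intros (Hc & Hn & _ & Hz & H0 & H1 & _ & _ & _ & _).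
  set (Hs := fun b : bool => if b then Hs1 else Hs0).
  assert (Hblock : forall b n x, (1 <= n)%nat -> x 0%nat = b ->
            (forall j, (1 <= j <= n)%nat -> x j = negb b) -> x (S n) = b -> H x = Hs b n)
    by (intros [|]; [apply H1 | apply H0]).
  destruct (peierls_double_well H Hs Hc Hn Hz Hblock false) as (A1 & A2 & A3 & A4).
  destruct (peierls_double_well H Hs Hc Hn Hz Hblock true) as (B1 & B2 & B3 & B4).
  exact (conj A1 (conj A2 (conj A3 (conj A4 (conj B1 (conj B2 (conj B3 B4))))))).
Qed.
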